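(* For all integers $n,k\geq 1$, the RBM variety and the RBM model factor as Hadamard powers: $V^k_n=(V^1_n)^{[k]}$ and $M^k_n=(M^1_n)^{[k]}$.
   Context: For parameters $W\in\mathbb{R}^{k\times n}$, $b\in\mathbb{R}^n$, $c\in\mathbb{R}^k$ and $v\in\{0,1\}^n$, $h\in\{0,1\}^k$ put $\psi(v,h)=\exp(h^{\top}Wv+b^{\top}v+c^{\top}h)$ and $p(v)=\frac1Z\sum_{h}\psi(v,h)$ with $Z=\sum_{v,h}\psi(v,h)$. Equivalently, with $\gamma_i=e^{c_i}$, $\omega_{ij}=e^{W_{ij}}$, $\beta_j=e^{b_j}$, $p(v)=\frac1Z\beta_1^{v_1}\cdots\beta_n^{v_n}\prod_{i=1}^k(1+\gamma_i\omega_{i1}^{v_1}\cdots\omega_{in}^{v_n})$. The RBM model $M^k_n$ is the set of all such $(p(v))_{v\in\{0,1\}^n}$ in the open simplex $\Delta_{2^n-1}$. The RBM variety $V^k_n$ is the Zariski closure of $M^k_n$ in the complex projective space $\mathbb{P}^{2^n-1}$. For subvarieties $X,Y\subseteq\mathbb{P}^m$, the Hadamard product $X*Y$ is the closure of the image of the rational map $X\times Y\dashrightarrow\mathbb{P}^m$, $(x,y)\mapsto(x_0y_0:\dots:x_my_m)$; $X^{[1]}=X$ and $X^{[k]}=X*X^{[k-1]}$. For a subset $M$ of an open probability simplex, $M^{[k]}$ is the set of vectors obtained by componentwise multiplication of $k$ elements of $M$ followed by rescaling so that the coordinates sum to one. *)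

From HB Require Import structures.
From mathcomp Require Import all_boot all_order all_algebra.
From mathcomp Require Import all_classical all_reals.
From mathcomp.analysis Require Import sequences exp.
From mathcomp Require Import complex.
Set Implicit Arguments. Unset Strict Implicit. Unset Printing Implicit Defensive.
Import Order.TTheory GRing.Theory Num.Theory.
Local Open Scope ring_scope.
Local Open Scope classical_set_scope.

(* A subset of projective space is
   represented by the cone of its nonzero representative vectors. ---------- *)

(* A polynomial in the variables x_i (i : I): a finite list of terms
   (exponent vector, coefficient). *)
Definition poly_terms (I : finType) (F : fieldType) := seq ({ffun I -> nat} * F).

Definition peval (I : finType) (F : fieldType) (p : poly_terms I F) (x : I -> F) : F :=
  \sum_(t <- p) t.2 * \prod_(i : I) x i ^+ t.1 i.

Definition homog (I : finType) (F : fieldType) (d : nat) (p : poly_terms I F) : bool :=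
  all (fun t : {ffun I -> nat} * F => (\sum_(i : I) t.1 i)%N == d) p.

Definition nonzero_vec (I : finType) (F : fieldType) (x : I -> F) : Prop :=
  exists i, x i != 0.

Definition zariski_closure (I : finType) (F : fieldType) (S : set (I -> F)) : set (I -> F) :=
  [set x | nonzero_vec x /\
     forall (d : nat) (p : poly_terms I F), homog d p ->
       (forall y, S y -> peval p y = 0) -> peval p x = 0].

Definition hadamard (I : finType) (F : fieldType) (x y : I -> F) : I -> F :=
  fun i => x i * y i.

Definition hadamard_prod (I : finType) (F : fieldType) (X Y : set (I -> F)) : set (I -> F) :=
  zariski_closure [set z | exists x y, X x /\ Y y /\ z = hadamard x y /\ nonzero_vec z].

Fixpoint hadamard_pow (I : finType) (F : fieldType) (X : set (I -> F)) (k : nat) : set (I -> F) :=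
  match k with
  | 0 => X
  | 1 => X
  | k'.+1 => hadamard_prod X (hadamard_pow X k')
  end.

Definition states (n : nat) := {ffun 'I_n -> bool}.

Definition bit (b : bool) (R : realType) : R := if b then 1 else 0.

Definition rbm_psi (R : realType) (n k : nat)
    (W : 'I_k -> 'I_n -> R) (b : 'I_n -> R) (c : 'I_k -> R)
    (v : states n) (h : states k) : R :=
  expR (\sum_(i < k) \sum_(j < n) bit (h i) R * W i j * bit (v j) R
        + \sum_(j < n) b j * bit (v j) R
        + \sum_(i < k) c i * bit (h i) R).

Definition rbm_Z (R : realType) (n k : nat)
    (W : 'I_k -> 'I_n -> R) (b : 'I_n -> R) (c : 'I_k -> R) : R :=
  \sum_(v : states n) \sum_(h : states k) rbm_psi W b c v h.

Definition rbm_dist (R : realType) (n k : nat)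
    (W : 'I_k -> 'I_n -> R) (b : 'I_n -> R) (c : 'I_k -> R) : states n -> R :=
  fun v => (\sum_(h : states k) rbm_psi W b c v h) / rbm_Z W b c.

Definition open_simplex (R : realType) (I : finType) : set (I -> R) :=
  [set p | (forall i, 0 < p i) /\ \sum_(i : I) p i = 1].

Definition rbm_model (R : realType) (n k : nat) : set (states n -> R) :=
  [set p | open_simplex p /\
     exists (W : 'I_k -> 'I_n -> R) (b : 'I_n -> R) (c : 'I_k -> R),
       p = rbm_dist W b c].
Arguments rbm_model R n k : clear implicits.

Definition to_complex (R : realType) (I : finType) (p : I -> R) : I -> R[i] :=
  fun i => Complex (p i) 0.

Definition rbm_variety (R : realType) (n k : nat) : set (states n -> R[i]) :=
  zariski_closure ((@to_complex R (states n)) @` rbm_model R n k).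
Arguments rbm_variety R n k : clear implicits.

Definition model_hadamard_pow (R : realType) (I : finType) (M : set (I -> R)) (k : nat)
    : set (I -> R) :=
  [set p | exists ps : 'I_k -> (I -> R), (forall l, M (ps l)) /\
     p = (fun i => (\prod_(l < k) ps l i) / \sum_(j : I) \prod_(l < k) ps l j)].

From HB Require Import structures.
From mathcomp Require Import all_boot all_order all_algebra.
From mathcomp Require Import all_classical all_reals.
From mathcomp.analysis Require Import sequences exp.
From mathcomp Require Import complex ring.
Set Implicit Arguments. Unset Strict Implicit. Unset Printing Implicit Defensive.
Import Order.TTheory GRing.Theory Num.Theory.
Local Open Scope ring_scope.
Local Open Scope classical_set_scope.

(* Summing out the hidden units factorises the unnormalised marginal as
   beta^v * prod_i (1 + gamma_i omega_i^v), one factor per hidden unit.  Hence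
   a pointwise product of k one-hidden-unit weights is a k-hidden-unit weight
   (the visible biases add up, so a bias b is obtained from k copies of b/k);
   normalising gives M^k_n = (M^1_n)^[k].

   For the varieties, Zariski closure commutes with Hadamard products of sets
   that are closed under products up to nonzero scalars: for fixed y, the map
   x |-> p(x * y) is again a homogeneous polynomial, and homogeneity absorbs
   the rescaling that renormalisation introduces. *)

Section ZariskiClosure.
Variables (I : finType) (F : fieldType).
Implicit Types (S T : set (I -> F)) (p : poly_terms I F) (x y : I -> F).

Lemma zariski_closure_sub S T :
  S `<=` zariski_closure T -> zariski_closure S `<=` zariski_closure T.
Proof.
move=> ST x [nx Sx]; split => // d p hp pT; apply: (Sx d p hp) => y Sy.
by have [_ Ty] := ST y Sy; exact: Ty d p hp pT.
Qed.

Lemma sub_zariski_closure T :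
  (forall x, T x -> nonzero_vec x) -> T `<=` zariski_closure T.
Proof. by move=> Tnz x Tx; split; [exact: Tnz | move=> d p _ /(_ x Tx)]. Qed.

Lemma peval_homogZ d p a x : homog d p ->
  peval p (fun i => a * x i) = a ^+ d * peval p x.
Proof.
rewrite /homog /peval => /allP hp.
rewrite mulr_sumr big_seq [RHS]big_seq; apply: eq_bigr => t tp.
under eq_bigr do rewrite exprMn.
by rewrite big_split /= prodrXr (eqP (hp t tp)) mulrCA.
Qed.

Lemma zariski_closureZ T a x : a != 0 ->
  zariski_closure T x -> zariski_closure T (fun i => a * x i).
Proof.
move=> a0 [[i xi] Tx]; split; first by exists i; rewrite mulf_neq0.
by move=> d p hp pT; rewrite (peval_homogZ _ _ hp) (Tx d p hp pT) mulr0.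
Qed.

Definition subst_hadamard p y : poly_terms I F :=
  map (fun t : {ffun I -> nat} * F => (t.1, t.2 * \prod_i y i ^+ t.1 i)) p.

Lemma homog_subst_hadamard d p y : homog d p -> homog d (subst_hadamard p y).
Proof. by rewrite /homog /subst_hadamard all_map. Qed.

Lemma peval_subst_hadamard p y x :
  peval (subst_hadamard p y) x = peval p (hadamard x y).
Proof.
rewrite /peval /subst_hadamard big_map; apply: eq_bigr => t _ /=.
under [in RHS]eq_bigr do rewrite /hadamard exprMn.
by rewrite big_split /= -mulrA [X in _ * X]mulrC.
Qed.

Lemma hadamardC x y : hadamard x y = hadamard y x.
Proof. by apply: funext => i; rewrite /hadamard mulrC. Qed.

Lemma zariski_closure_hadamard S T U :
  (forall z, U z -> exists x y a,
     [/\ S x, T y, nonzero_vec (hadamard x y), a != 0 & z = fun i => a * hadamard x y i]) ->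
  (forall x y, S x -> T y -> exists z a,
     [/\ U z, a != 0 & hadamard x y = fun i => a * z i]) ->
  (forall x, S x -> nonzero_vec x) -> (forall y, T y -> nonzero_vec y) ->
  zariski_closure U = hadamard_prod (zariski_closure S) (zariski_closure T).
Proof.
move=> Usplit STmul Snz Tnz; apply/seteqP; split.
- apply: zariski_closure_sub => _ /Usplit[x [y [a [Sx Ty nxy a0 ->]]]].
  apply: zariski_closureZ a0 _; apply: sub_zariski_closure => [z [? [? [_ [_ []]]]]|] //.
  exists x, y; split; first exact: sub_zariski_closure.
  by split; [exact: sub_zariski_closure | split].
- apply: zariski_closure_sub => _ [x [y [[_ clSx] [[_ clTy] [-> nz]]]]].
  split => // d p hp pU.
  have pST x' y' : S x' -> T y' -> peval p (hadamard x' y') = 0.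
    move=> Sx' Ty'; have [z [a [Uz a0 ->]]] := STmul _ _ Sx' Ty'.
    by rewrite (peval_homogZ _ _ hp) (pU z Uz) mulr0.
  have pclS y' : T y' -> peval p (hadamard x y') = 0.
    move=> Ty'; rewrite -peval_subst_hadamard.
    apply: (clSx d); first exact: homog_subst_hadamard.
    by move=> x' Sx'; rewrite peval_subst_hadamard; exact: pST.
  rewrite hadamardC -peval_subst_hadamard.
  apply: (clTy d); first exact: homog_subst_hadamard.
  by move=> y' Ty'; rewrite peval_subst_hadamard hadamardC; exact: pclS.
Qed.

End ZariskiClosure.

Section Normalize.
Variables (R : realType) (I : finType).
Implicit Types g : I -> R.

Definition normalize g : I -> R := fun i => g i / \sum_j g j.

Lemma normalizeZ g C : C != 0 -> normalize (fun i => g i * C) = normalize g.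
Proof.
move=> C0; apply: funext => i; rewrite /normalize -mulr_suml invfM.
by rewrite mulrACA mulfV // mulr1.
Qed.

Lemma normalize_id g : \sum_i g i = 1 -> normalize g = g.
Proof. by move=> g1; apply: funext => i; rewrite /normalize g1 divr1. Qed.

Lemma sumr_gt0 (i0 : I) g : (forall i, 0 < g i) -> 0 < \sum_i g i.
Proof.
move=> gp; rewrite (bigD1 i0) //=; apply: ltr_pwDl (gp i0) _.
by apply: sumr_ge0 => i _; exact: ltW.
Qed.

Lemma normalize_gt0 (i : I) g : (forall j, 0 < g j) -> 0 < normalize g i.
Proof. by move=> gp; rewrite divr_gt0 // (sumr_gt0 i). Qed.

Lemma normalize_open_simplex (i0 : I) g :
  (forall i, 0 < g i) -> open_simplex (normalize g).
Proof.
move=> gp; split => [i|]; first exact: normalize_gt0.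
by rewrite /normalize -mulr_suml mulfV // gt_eqF // (sumr_gt0 i0).
Qed.

End Normalize.

Section ModelHadamardPow.
Variables (R : realType) (I : finType) (i0 : I) (M : set (I -> R)).
Hypothesis M_simplex : M `<=` @open_simplex R I.

Local Notation "M ^[ k ]" := (model_hadamard_pow M k) (at level 2, format "M ^[ k ]").

Lemma model_hadamard_pow1 : M^[1] = M.
Proof.
have norm1 (ps : 'I_1 -> I -> R) :
    (fun i => (\prod_(l < 1) ps l i) / \sum_j \prod_(l < 1) ps l j) = normalize (ps ord0).
  by apply: funext => i; rewrite /normalize big_ord1; under eq_bigr do rewrite big_ord1.
apply/seteqP; split => [_ [ps [Mps ->]] | p Mp].
  by have [_ ps1] := M_simplex (Mps ord0); rewrite norm1 normalize_id.
by exists (fun=> p); have [_ p1] := M_simplex Mp; rewrite norm1 normalize_id.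
Qed.

Lemma prod_model_gt0 k (ps : 'I_k -> I -> R) i :
  (forall l, M (ps l)) -> 0 < \prod_(l < k) ps l i.
Proof.
by move=> Mps; apply: prodr_gt0 => l _; have [ps_gt0 _] := M_simplex (Mps l).
Qed.

Lemma model_hadamard_pow_gt0 k p : M^[k] p -> forall i, 0 < p i.
Proof. by move=> [ps [Mps ->]] i; apply: normalize_gt0 => j; exact: prod_model_gt0. Qed.

Lemma model_hadamard_powS_factor k s : M^[k.+1] s -> exists m1 m (a : R),
  [/\ M m1, M^[k] m, a != 0 & s = fun i => a * (m1 i * m i)].
Proof.
move=> [ps [Mps ->]].
pose P i := \prod_(l < k) ps (lift ord0 l) i.
have P_gt0 i : 0 < P i by apply: (prod_model_gt0 (ps := fun l => ps (lift ord0 l))) => l.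
have sumP_gt0 := sumr_gt0 i0 P_gt0.
have sum_gt0 := sumr_gt0 i0 (fun i => prod_model_gt0 i Mps).
exists (ps ord0), (normalize P), ((\sum_j P j) / \sum_j \prod_(l < k.+1) ps l j).
split => //; first by exists (fun l => ps (lift ord0 l)).
  by rewrite mulf_neq0 // ?invr_eq0 gt_eqF.
apply: funext => i; rewrite /normalize big_ord_recl -/(P i).
by field; rewrite !gt_eqF.
Qed.

Lemma model_hadamard_powS_mul k m1 m : M m1 -> M^[k] m -> exists s (a : R),
  [/\ M^[k.+1] s, a != 0 & (fun i => m1 i * m i) = fun i => a * s i].
Proof.
move=> Mm1 [qs [Mqs ->]].
pose ps (l : 'I_k.+1) := if unlift ord0 l is Some l' then qs l' else m1.
have Mps l : M (ps l) by rewrite /ps; case: unlift.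
have psE i : \prod_(l < k.+1) ps l i = m1 i * \prod_(l < k) qs l i.
  by rewrite big_ord_recl /ps unlift_none; under eq_bigr do rewrite liftK.
have sumq_gt0 := sumr_gt0 i0 (fun i => prod_model_gt0 i Mqs).
have sump_gt0 := sumr_gt0 i0 (fun i => prod_model_gt0 i Mps).
exists (normalize (fun i => \prod_(l < k.+1) ps l i)).
exists ((\sum_j \prod_(l < k.+1) ps l j) / \sum_j \prod_(l < k) qs l j).
split; first by exists ps.
  by rewrite mulf_neq0 // ?invr_eq0 gt_eqF.
apply: funext => i; rewrite /normalize psE.
by field; rewrite !gt_eqF.
Qed.

End ModelHadamardPow.

Section ToComplex.
Variables (R : realType) (I : finType).
Local Notation tc := (@to_complex R I).

Lemma to_complexM (x y : I -> R) : tc (fun i => x i * y i) = hadamard (tc x) (tc y).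
Proof. by apply: funext => i; exact: (rmorphM (real_complex R)). Qed.

Lemma to_complexZ a (x : I -> R) :
  tc (fun i => a * x i) = fun i => real_complex R a * tc x i.
Proof. by apply: funext => i; exact: (rmorphM (real_complex R)). Qed.

Lemma to_complex_nonzero (x : I -> R) i : x i != 0 -> nonzero_vec (tc x).
Proof. by move=> xi; exists i; rewrite /to_complex complexr0 fmorph_eq0. Qed.

End ToComplex.

Section ModelClosure.
Variables (R : realType) (I : finType) (i0 : I) (M : set (I -> R)).
Hypothesis M_simplex : M `<=` @open_simplex R I.

Local Notation "M ^[ k ]" := (model_hadamard_pow M k) (at level 2, format "M ^[ k ]").
Local Notation tc := (@to_complex R I).

Lemma zariski_closure_model_hadamard_powS k :
  zariski_closure (tc @` M^[k.+1]) =
  hadamard_prod (zariski_closure (tc @` M)) (zariski_closure (tc @` M^[k])).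
Proof.
have M_gt0 x : M x -> 0 < x i0 by case/M_simplex.
have Mk_gt0 x : M^[k] x -> 0 < x i0 by move/(model_hadamard_pow_gt0 M_simplex).
have tc_nonzero x : 0 < x i0 -> nonzero_vec (tc x).
  by move=> x_gt0; apply: (to_complex_nonzero (i := i0)); rewrite gt_eqF.
apply: zariski_closure_hadamard.
- move=> _ [s /(model_hadamard_powS_factor i0 M_simplex)[m1 [m [a [Mm1 Mm a0 ->]]]] <-].
  exists (tc m1), (tc m), (real_complex R a); split.
  + by exists m1.
  + by exists m.
  + by rewrite -to_complexM; apply: tc_nonzero; apply: mulr_gt0; [exact: M_gt0 | exact: Mk_gt0].
  + by apply: contra a0 => /eqP[->].
  + by rewrite to_complexZ to_complexM.
- move=> _ _ [m1 Mm1 <-] [m Mm <-].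
  have [s [a [Ms a0 E]]] := model_hadamard_powS_mul i0 M_simplex Mm1 Mm.
  exists (tc s), (real_complex R a); split; first by exists s.
    by apply: contra a0 => /eqP[->].
  by rewrite -to_complexM E to_complexZ.
- by move=> _ [x /M_gt0 x_gt0 <-]; exact: tc_nonzero.
- by move=> _ [x /Mk_gt0 x_gt0 <-]; exact: tc_nonzero.
Qed.

Lemma zariski_closure_model_hadamard_pow k : (1 <= k)%N ->
  zariski_closure (tc @` M^[k]) = hadamard_pow (zariski_closure (tc @` M)) k.
Proof.
case: k => // k _; elim: k => [|k IHk]; first by rewrite model_hadamard_pow1.
by rewrite zariski_closure_model_hadamard_powS IHk.
Qed.

End ModelClosure.

Section RBM.
Variables (R : realType) (n : nat).

Definition dot_bits (b : 'I_n -> R) (v : states n) : R := \sum_(j < n) b j * bit (v j) R.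

Definition rbm_weight k (W : 'I_k -> 'I_n -> R) (b : 'I_n -> R) (c : 'I_k -> R)
    (v : states n) : R :=
  expR (dot_bits b v) * \prod_(i < k) (1 + expR (c i + dot_bits (W i) v)).

Lemma sum_rbm_psi k (W : 'I_k -> 'I_n -> R) b c v :
  \sum_(h : states k) rbm_psi W b c v h = rbm_weight W b c v.
Proof.
have psiE h : rbm_psi W b c v h =
    expR (dot_bits b v) * \prod_(i < k) expR (bit (h i) R * (c i + dot_bits (W i) v)).
  rewrite /rbm_psi -expR_sum -expRD; congr expR.
  rewrite addrAC addrC -big_split /=; congr (_ + _); apply: eq_bigr => i _.
  rewrite mulrDr mulr_sumr addrC [c i * _]mulrC; congr (_ + _).
  by apply: eq_bigr => j _; rewrite mulrA.
under eq_bigr do rewrite psiE.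
rewrite -mulr_sumr /rbm_weight; congr (_ * _).
rewrite -(bigA_distr_bigA (fun i (x : bool) => expR (bit x R * (c i + dot_bits (W i) v)))) /=.
by apply: eq_bigr => i _; rewrite big_bool /= /bit mul1r mul0r expR0 addrC.
Qed.

Lemma rbm_weight_gt0 k (W : 'I_k -> 'I_n -> R) b c v : 0 < rbm_weight W b c v.
Proof.
by rewrite mulr_gt0 ?expR_gt0 // prodr_gt0 // => i _; rewrite addr_gt0 ?expR_gt0.
Qed.

Lemma rbm_distE k (W : 'I_k -> 'I_n -> R) b c :
  rbm_dist W b c = normalize (rbm_weight W b c).
Proof.
apply: funext => v; rewrite /rbm_dist /normalize /rbm_Z sum_rbm_psi.
by under eq_bigr do rewrite sum_rbm_psi.
Qed.

Lemma rbm_model_dist k (W : 'I_k -> 'I_n -> R) b c : rbm_model R n k (rbm_dist W b c).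
Proof.
split; last by exists W, b, c.
by rewrite rbm_distE; apply: (normalize_open_simplex [ffun=> false]) => v; exact: rbm_weight_gt0.
Qed.

Lemma prod_rbm_weight1 k (Ws : 'I_k -> 'I_1 -> 'I_n -> R) bs cs v :
  \prod_(l < k) rbm_weight (Ws l) (bs l) (cs l) v =
  rbm_weight (fun l => Ws l ord0) (fun j => \sum_(l < k) bs l j) (fun l => cs l ord0) v.
Proof.
rewrite /rbm_weight; under eq_bigr do rewrite big_ord1.
rewrite big_split /= -expR_sum; congr (expR _ * _).
by rewrite /dot_bits exchange_big /=; apply: eq_bigr => j _; rewrite mulr_suml.
Qed.

Lemma normalize_prod_rbm_dist1 k (Ws : 'I_k -> 'I_1 -> 'I_n -> R) bs cs :
  normalize (fun v => \prod_(l < k) rbm_dist (Ws l) (bs l) (cs l) v) =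
  rbm_dist (fun l => Ws l ord0) (fun j => \sum_(l < k) bs l j) (fun l => cs l ord0).
Proof.
pose Z l := \sum_u rbm_weight (Ws l) (bs l) (cs l) u.
have Z_gt0 l : 0 < Z l.
  by apply: (sumr_gt0 [ffun=> false]) => u; exact: rbm_weight_gt0.
rewrite rbm_distE -[RHS](@normalizeZ _ _ _ (\prod_l Z l)^-1); last first.
  by rewrite invr_eq0 gt_eqF // prodr_gt0.
congr normalize; apply: funext => v.
rewrite -prod_rbm_weight1 -prodfV -big_split.
by apply: eq_bigr => l _; rewrite (rbm_distE (Ws l)).
Qed.

Lemma rbm_model_hadamard_pow k : (1 <= k)%N ->
  rbm_model R n k = model_hadamard_pow (rbm_model R n 1) k.
Proof.
move=> k_gt0; apply/seteqP; split => [p [_ [W [b [c ->]]]] | _ [ps [Mps ->]]].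
-
  exists (fun l => rbm_dist (fun _ : 'I_1 => W l) (fun j => b j / k%:R) (fun _ => c l)).
  split=> [l|]; first exact: rbm_model_dist.
  have := normalize_prod_rbm_dist1 (fun l _ => W l) (fun l j => b j / k%:R) (fun l _ => c l).
  rewrite /normalize /= => ->.
  suff -> : (fun j => \sum_(l < k) b j / k%:R) = b by [].
  apply: funext => j.
  by rewrite sumr_const card_ord -[_ *+ k]mulr_natr mulfVK // pnatr_eq0 -lt0n.
- have /boolp.choice[f psE] : forall l, exists t : ('I_1 -> 'I_n -> R) * ('I_n -> R) * ('I_1 -> R),
      ps l = rbm_dist t.1.1 t.1.2 t.2.
    by move=> l; have [_ [W [b [c E]]]] := Mps l; exists (W, b, c).
  have -> : ps = fun l => rbm_dist (f l).1.1 (f l).1.2 (f l).2 by apply: funext.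
  have := normalize_prod_rbm_dist1 (fun l => (f l).1.1) (fun l => (f l).1.2) (fun l => (f l).2).
  rewrite /normalize /= => ->; exact: rbm_model_dist.
Qed.

End RBM.

Theorem proposition2p1 (R : realType) (n k : nat) :
  (1 <= n)%N -> (1 <= k)%N ->
  rbm_variety R n k = hadamard_pow (rbm_variety R n 1) k /\
  rbm_model R n k = model_hadamard_pow (rbm_model R n 1) k.
Proof.
move=> _ k_gt0; have M1_simplex : rbm_model R n 1 `<=` @open_simplex R (states n).
  by move=> p [].
split; last exact: rbm_model_hadamard_pow.
rewrite /rbm_variety (rbm_model_hadamard_pow R n k_gt0).
exact (zariski_closure_model_hadamard_pow [ffun=> false] M1_simplex k_gt0).
Qed.
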